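(* Let $0<H<1$, $1-H<\alpha<1$, and $z_1,z_2>0$. Put $$I=z_2^{2(H+\alpha-1)}+z_1^{2(H+\alpha-1)}+\frac{|z_2-z_1|^{2H}-z_1^{2H}-z_2^{2H}}{(z_1z_2)^{1-\alpha}}.$$ Then $I\le C(H,\alpha)|z_2-z_1|^{2(H+\alpha-1)}$, where $C(H,\alpha)$ depends only on $H$ and $\alpha$. *)

From Stdlib Require Import Reals.
Open Scope R_scope.

(* Real power x^y for x >= 0, with the convention 0^y = 0 (used only with y > 0).
   Stdlib's Rpower gives Rpower 0 y = 1, which is wrong for our purposes. *)
Definition rpow (x y : R) : R :=
  if Req_EM_T x 0 then 0 else Rpower x y.

Definition Iq (H alpha z1 z2 : R) : R :=
  rpow z2 (2 * (H + alpha - 1)) + rpow z1 (2 * (H + alpha - 1))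
  + (rpow (Rabs (z2 - z1)) (2 * H) - rpow z1 (2 * H) - rpow z2 (2 * H))
    / rpow (z1 * z2) (1 - alpha).

(* Lemma A.1: with beta = H + alpha - 1 > 0 and gamma = 1 - alpha > 0, so that
   2H = 2 beta + 2 gamma, the quantity
     I = z1^(2 beta) + z2^(2 beta) + (|z2 - z1|^(2H) - z1^(2H) - z2^(2H)) / (z1 z2)^gamma
   is bounded by C |z2 - z1|^(2 beta).

   Two bounds hold for all z1, z2 > 0:
   - the cross-term bound  I <= |z2 - z1|^(2H) / (z1 z2)^gamma,  which follows
     from the Chebyshev-type rearrangement inequality
       (a^p + b^p) (a b)^q <= a^(p + 2q) + b^(p + 2q);
   - the crude bound  I <= z1^(2 beta) + z2^(2 beta),  since |z2 - z1| is at
     most max(z1, z2), so the numerator of the fraction is nonpositive.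
   If d = |z2 - z1| is at most both z1 and z2, then d^(2 gamma) <= (z1 z2)^gamma
   and the cross-term bound gives I <= d^(2 beta).  Otherwise z1, z2 < 2d and
   the crude bound gives I <= 2 (2d)^(2 beta).  Hence C = 2 * 2^(2 beta) works. *)

From Stdlib Require Import Reals Lra Psatz.
Open Scope R_scope.

Lemma rpow_pos_eq (x y : R) : 0 < x -> rpow x y = Rpower x y.
Proof. intros hx; unfold rpow; destruct (Req_EM_T x 0); [lra | reflexivity]. Qed.

Lemma rpow_0_l (y : R) : rpow 0 y = 0.
Proof. unfold rpow; destruct (Req_EM_T 0 0); lra. Qed.

Lemma Rpower_pos (x y : R) : 0 < Rpower x y.
Proof. unfold Rpower; apply exp_pos. Qed.

Lemma rpow_nonneg (x y : R) : 0 <= rpow x y.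
Proof.
  unfold rpow; destruct (Req_EM_T x 0); [lra | apply Rlt_le, Rpower_pos].
Qed.

Lemma rpow_le_base (x y e : R) :
  0 <= e -> 0 <= x <= y -> 0 < y -> rpow x e <= Rpower y e.
Proof.
  intros he hxy hy.
  destruct (Req_dec x 0) as [-> | hx0].
  - rewrite rpow_0_l; apply Rlt_le, Rpower_pos.
  - rewrite rpow_pos_eq by lra; apply Rle_Rpower_l; lra.
Qed.

(* Chebyshev-type rearrangement: the sequences (a^q, b^q) and (a^(p+q), b^(p+q))
   are similarly ordered, so  (b^q - a^q)(b^(p+q) - a^(p+q)) >= 0,  which
   expands to the inequality below. *)
Lemma Rpower_rearrangement (a b p q : R) :
  0 < a -> 0 < b -> 0 <= q -> 0 <= p + q ->
  (Rpower a p + Rpower b p) * Rpower (a * b) q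
  <= Rpower a (p + 2 * q) + Rpower b (p + 2 * q).
Proof.
  intros ha hb hq hpq.
  rewrite <- Rpower_mult_distr by lra.
  replace (p + 2 * q) with ((p + q) + q) by ring.
  rewrite !Rpower_plus.
  assert (similarly_ordered :
    0 <= (Rpower b q - Rpower a q) * (Rpower b (p + q) - Rpower a (p + q))).
  { destruct (Rle_dec a b) as [hab | hab].
    - assert (Rpower a q <= Rpower b q) by (apply Rle_Rpower_l; lra).
      assert (Rpower a (p + q) <= Rpower b (p + q)) by (apply Rle_Rpower_l; lra).
      nra.
    - assert (Rpower b q <= Rpower a q) by (apply Rle_Rpower_l; lra).
      assert (Rpower b (p + q) <= Rpower a (p + q)) by (apply Rle_Rpower_l; lra).
      nra. }
  rewrite !Rpower_plus in similarly_ordered. nra.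
Qed.

(* |b - a|^e is at most a^e + b^e, as |b - a| <= max(a, b). *)
Lemma rpow_abs_diff_le (a b e : R) :
  0 < a -> 0 < b -> 0 <= e ->
  rpow (Rabs (b - a)) e <= Rpower a e + Rpower b e.
Proof.
  intros ha hb he.
  pose proof (Rpower_pos a e); pose proof (Rpower_pos b e).
  destruct (Rle_dec a b) as [hab | hab].
  - assert (rpow (Rabs (b - a)) e <= Rpower b e)
      by (apply rpow_le_base; [lra | split; [apply Rabs_pos | rewrite Rabs_right; lra] | lra]).
    lra.
  - assert (rpow (Rabs (b - a)) e <= Rpower a e)
      by (apply rpow_le_base; [lra | split; [apply Rabs_pos | rewrite Rabs_left; lra] | lra]).
    lra.
Qed.

Section Bounds.

Variables H alpha : R.
Hypothesis hbeta : 0 <= H + alpha - 1.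
Hypothesis hgamma : 0 <= 1 - alpha.

Let two_H : 2 * H = 2 * (H + alpha - 1) + 2 * (1 - alpha).
Proof. ring. Qed.

Let Iq_Rpower (z1 z2 : R) : 0 < z1 -> 0 < z2 ->
  Iq H alpha z1 z2 =
  Rpower z2 (2 * (H + alpha - 1)) + Rpower z1 (2 * (H + alpha - 1))
  + (rpow (Rabs (z2 - z1)) (2 * H) - Rpower z1 (2 * H) - Rpower z2 (2 * H))
    / Rpower (z1 * z2) (1 - alpha).
Proof.
  intros h1 h2; unfold Iq.
  rewrite !(rpow_pos_eq z1), !(rpow_pos_eq z2), (rpow_pos_eq (z1 * z2)) by nra.
  reflexivity.
Qed.

(* Cross-term bound: the rearrangement inequality absorbs the two leading terms. *)
Lemma Iq_le_cross_term (z1 z2 : R) : 0 < z1 -> 0 < z2 ->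
  Iq H alpha z1 z2
  <= rpow (Rabs (z2 - z1)) (2 * H) / Rpower (z1 * z2) (1 - alpha).
Proof.
  intros h1 h2; rewrite Iq_Rpower by lra.
  pose proof (Rpower_pos (z1 * z2) (1 - alpha)) as hP.
  pose proof (Rpower_rearrangement z1 z2 (2 * (H + alpha - 1)) (1 - alpha)
                h1 h2 hgamma ltac:(lra)) as hre.
  rewrite <- two_H in hre.
  apply Rmult_le_reg_r with (Rpower (z1 * z2) (1 - alpha)); [exact hP |].
  unfold Rdiv; rewrite Rmult_plus_distr_r, !Rmult_assoc, Rinv_l by lra.
  lra.
Qed.

(* Crude bound: the fraction in [I] has a nonpositive numerator. *)
Lemma Iq_le_sum_powers (z1 z2 : R) : 0 < z1 -> 0 < z2 ->
  Iq H alpha z1 z2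
  <= Rpower z1 (2 * (H + alpha - 1)) + Rpower z2 (2 * (H + alpha - 1)).
Proof.
  intros h1 h2; rewrite Iq_Rpower by lra.
  pose proof (Rpower_pos (z1 * z2) (1 - alpha)) as hP.
  assert (hnum : rpow (Rabs (z2 - z1)) (2 * H) - Rpower z1 (2 * H) - Rpower z2 (2 * H) <= 0)
    by (pose proof (rpow_abs_diff_le z1 z2 (2 * H) h1 h2 ltac:(lra)); lra).
  pose proof (Rinv_0_lt_compat _ hP).
  unfold Rdiv; nra.
Qed.

Lemma Iq_bound_near (z1 z2 : R) : 0 < z1 -> 0 < z2 ->
  Rabs (z2 - z1) <= z1 -> Rabs (z2 - z1) <= z2 ->
  Iq H alpha z1 z2 <= rpow (Rabs (z2 - z1)) (2 * (H + alpha - 1)).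
Proof.
  intros h1 h2 hd1 hd2.
  eapply Rle_trans; [apply Iq_le_cross_term; assumption |].
  pose proof (Rabs_pos (z2 - z1)) as hd_nonneg.
  set (d := Rabs (z2 - z1)) in *.
  destruct (Req_dec d 0) as [-> | hd0].
  - rewrite !rpow_0_l; unfold Rdiv; lra.
  - assert (hd : 0 < d) by lra.
    rewrite !rpow_pos_eq by exact hd.
    assert (hsmall : Rpower d (2 * (1 - alpha)) <= Rpower (z1 * z2) (1 - alpha)).
    { replace (2 * (1 - alpha)) with ((1 - alpha) + (1 - alpha)) by ring.
      rewrite Rpower_plus, <- Rpower_mult_distr by lra.
      apply Rmult_le_compat; try (apply Rlt_le, Rpower_pos);
        apply Rle_Rpower_l; lra. }
    pose proof (Rpower_pos d (2 * (H + alpha - 1))).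
    pose proof (Rpower_pos (z1 * z2) (1 - alpha)).
    rewrite two_H, Rpower_plus.
    apply Rmult_le_reg_r with (Rpower (z1 * z2) (1 - alpha)); [lra |].
    unfold Rdiv; rewrite Rmult_assoc, Rinv_l, Rmult_1_r by lra.
    nra.
Qed.

(* Far regime: if |z2 - z1| exceeds z1 or z2, both points are below 2|z2 - z1|. *)
Lemma Iq_bound_far (z1 z2 : R) : 0 < z1 -> 0 < z2 ->
  z1 < Rabs (z2 - z1) \/ z2 < Rabs (z2 - z1) ->
  Iq H alpha z1 z2
  <= 2 * Rpower 2 (2 * (H + alpha - 1)) * rpow (Rabs (z2 - z1)) (2 * (H + alpha - 1)).
Proof.
  intros h1 h2 hfar.
  eapply Rle_trans; [apply Iq_le_sum_powers; assumption |].
  set (d := Rabs (z2 - z1)) in *.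
  assert (hd : 0 < d) by lra.
  assert (hz : z1 <= 2 * d /\ z2 <= 2 * d)
    by (unfold d in *; destruct (Rle_dec z1 z2);
        [rewrite Rabs_right in * | rewrite Rabs_left in *]; lra).
  rewrite rpow_pos_eq, Rmult_assoc, Rpower_mult_distr by lra.
  assert (Rpower z1 (2 * (H + alpha - 1)) <= Rpower (2 * d) (2 * (H + alpha - 1)))
    by (apply Rle_Rpower_l; lra).
  assert (Rpower z2 (2 * (H + alpha - 1)) <= Rpower (2 * d) (2 * (H + alpha - 1)))
    by (apply Rle_Rpower_l; lra).
  lra.
Qed.

End Bounds.

Theorem lemmaA1 (H alpha : R) (hH0 : 0 < H) (hH1 : H < 1)
  (ha0 : 1 - H < alpha) (ha1 : alpha < 1) :
  exists C : R, forall z1 z2 : R, 0 < z1 -> 0 < z2 ->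
    Iq H alpha z1 z2 <= C * rpow (Rabs (z2 - z1)) (2 * (H + alpha - 1)).
Proof.
  assert (hbeta : 0 <= H + alpha - 1) by lra.
  assert (hgamma : 0 <= 1 - alpha) by lra.
  exists (2 * Rpower 2 (2 * (H + alpha - 1))).
  intros z1 z2 h1 h2.
  destruct (Rle_dec (Rabs (z2 - z1)) z1) as [hd1 | hd1];
  [destruct (Rle_dec (Rabs (z2 - z1)) z2) as [hd2 | hd2] |].
  - assert (hC : 1 <= 2 * Rpower 2 (2 * (H + alpha - 1))).
    { assert (1 <= Rpower 2 (2 * (H + alpha - 1)))
        by (rewrite <- (Rpower_O 2) at 1 by lra; apply Rle_Rpower; lra).
      lra. }
    pose proof (rpow_nonneg (Rabs (z2 - z1)) (2 * (H + alpha - 1))).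
    pose proof (Iq_bound_near H alpha hbeta hgamma z1 z2 h1 h2 hd1 hd2).
    nra.
  - apply Iq_bound_far; [assumption .. | right; lra].
  - apply Iq_bound_far; [assumption .. | left; lra].
Qed.
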